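(* Let $p\in\mathbb{R}$ and let $\gamma$ be a $p$-elastic curve in $\mathbb{S}^2$ whose curvature is a non-constant periodic function of arc length. Then either $p=2$ or $p\in(0,1)$.
   Context: $\mathbb{S}^2$ is the unit sphere in $\mathbb{R}^3$ with the induced metric. For an immersed curve $\gamma$ in $\mathbb{S}^2$ parametrized by arc length $s$, let $T=\gamma'$, let $N$ be the rotation of $T$ by $+\pi/2$ in the tangent plane of $\mathbb{S}^2$, and define the geodesic curvature $\kappa$ by $\nabla_T T=\kappa N$. Curves are smooth (class $\mathcal{C}^4$ suffices). Here $\mathbb{N}$ includes $0$. The $p$-elastic functional is $\mathbf{\Theta}_p(\gamma)=\int_\gamma \kappa^p\,ds$; if $p\in\mathbb{R}\setminus\mathbb{N}$ it is considered only on convex curves ($\kappa>0$ everywhere). A $p$-elastic curve is a curve (convex if $p\notin\mathbb{N}$) whose curvature satisfies $$p\,\frac{d^2}{ds^2}\left(\kappa^{p-1}\right)+(p-1)\kappa^{p+1}+p\,\kappa^{p-1}=0.$$ *)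

From Stdlib Require Import Reals.
From Coquelicot Require Import Coquelicot.
Open Scope R_scope.

(** Real power x^a: integer power when a is an integer (so that, e.g.,
    kappa^(p-1) makes sense for sign-changing kappa when p is a natural
    number), and Rpower x a (= exp (a ln x), meaningful for x > 0) otherwise.
    For x > 0 both branches agree with the usual x^a. *)
Definition cpow (x a : R) : R :=
  if Req_EM_T (IZR (Int_part a)) a then powerRZ x (Int_part a) else Rpower x a.

Definition is_natp (p : R) : Prop := exists n : nat, p = INR n.

Record curve3 := Curve3 { cx : R -> R ; cy : R -> R ; cz : R -> R }.

Definition C4 (f : R -> R) : Prop :=
  (forall (k : nat) (s : R), (k <= 4)%nat -> ex_derive_n f k s) /\
  (forall s, continuous (Derive_n f 4) s).

Definition arclength_S2_curve (g : curve3) : Prop :=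
  C4 (cx g) /\ C4 (cy g) /\ C4 (cz g) /\
  (forall s, (cx g s)^2 + (cy g s)^2 + (cz g s)^2 = 1) /\
  (forall s, (Derive (cx g) s)^2 + (Derive (cy g) s)^2 + (Derive (cz g) s)^2 = 1).

Definition T1 (g : curve3) s := Derive (cx g) s.
Definition T2 (g : curve3) s := Derive (cy g) s.
Definition T3 (g : curve3) s := Derive (cz g) s.

(** N = rotation of T by +pi/2 in the tangent plane T_gamma S^2, oriented by
    the outward normal gamma:  N = gamma x T. *)
Definition N1 (g : curve3) s := cy g s * T3 g s - cz g s * T2 g s.
Definition N2 (g : curve3) s := cz g s * T1 g s - cx g s * T3 g s.
Definition N3 (g : curve3) s := cx g s * T2 g s - cy g s * T1 g s.

(** Geodesic curvature: nabla_T T = kappa N, where nabla_T T is the tangential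
    projection of gamma''; since N is tangent to S^2 and unit,
    kappa = < nabla_T T , N > = < gamma'' , N >. *)
Definition geod_curv (g : curve3) (s : R) : R :=
  Derive_n (cx g) 2 s * N1 g s + Derive_n (cy g) 2 s * N2 g s
  + Derive_n (cz g) 2 s * N3 g s.

Definition p_elastic (p : R) (g : curve3) : Prop :=
  let k := geod_curv g in
  let F := fun s => cpow (k s) (p - 1) in
  (~ is_natp p -> forall s, 0 < k s) /\
  (forall s, ex_derive F s) /\
  (forall s, ex_derive_n F 2 s) /\
  (forall s, p * Derive_n F 2 s + (p - 1) * cpow (k s) (p + 1) + p * F s = 0).

Definition nonconst_periodic (f : R -> R) : Prop :=
  (exists L, 0 < L /\ forall s, f (s + L) = f s) /\
  (exists s1 s2, f s1 <> f s2).

From Stdlib Require Import Reals Lra Lia Psatz Classical.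
From Coquelicot Require Import Coquelicot.
Open Scope R_scope.

(* F = kappa^(p-1) and its derivative are periodic, so by Rolle F'' vanishes at
   some c, where the equation reduces to kappa^(p-1) ((p-1) kappa^2 + p) = 0.
   If p is not an integer, kappa > 0 and (p-1) kappa(c)^2 = -p, whence
   0 < p < 1.  For p = n integer: n = 0 forces kappa = 0 identically, n = 1
   makes the equation at c read 1 = 0, and for n >= 3 it gives kappa(c) = 0.
   In the last case the first integral
   p/2 F'^2 + (p-1)^2/(2p) kappa^(2p) + p/2 F^2 vanishes at c, hence
   everywhere, so again kappa = 0.  A vanishing curvature is constant, so
   only p = 2 and 0 < p < 1 remain. *)

Lemma C4_ex_derive_Derive_n f k s : C4 f -> (k <= 3)%nat -> ex_derive (Derive_n f k) s.
Proof. intros [Hf _] Hk; exact (Hf (S k) s ltac:(lia)). Qed.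

Lemma geod_curv_ex_derive g : arclength_S2_curve g -> forall s, ex_derive (geod_curv g) s.
Proof.
intros [Hx [Hy [Hz _]]] s.
unfold geod_curv, N1, N2, N3, T1, T2, T3.
auto_derive.
repeat split; match goal with
  | |- ex_derive (fun _ => Derive (fun _ => Derive (fun _ => ?f _) _) _) _ =>
      exact (C4_ex_derive_Derive_n f 2 s ltac:(assumption) ltac:(lia))
  | |- ex_derive (fun _ => Derive ?f _) _ =>
      exact (C4_ex_derive_Derive_n f 1 s ltac:(assumption) ltac:(lia))
  | |- ex_derive (fun _ => ?f _) _ =>
      exact (C4_ex_derive_Derive_n f 0 s ltac:(assumption) ltac:(lia))
  end.
Qed.

Lemma Rpow_eq_0 x n : x ^ n = 0 -> x = 0.
Proof.
intros Hx; destruct (Req_dec x 0) as [| Hx0]; [assumption |].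
now apply pow_nonzero with (n := n) in Hx0.
Qed.

Lemma cpow_Rpower x a : 0 < x -> cpow x a = Rpower x a.
Proof.
intros Hx; unfold cpow.
destruct Req_EM_T as [Ea | _]; [now rewrite powerRZ_Rpower, Ea | reflexivity].
Qed.

Lemma cpow_INR x n : cpow x (INR n) = x ^ n.
Proof.
unfold cpow.
assert (Hn : Int_part (INR n) = Z.of_nat n).
{ symmetry; apply Int_part_spec; rewrite <- INR_IZR_INZ; lra. }
rewrite Hn, <- INR_IZR_INZ.
destruct Req_EM_T as [_ | En]; [now rewrite pow_powerRZ | lra].
Qed.

Lemma cpow_INR_S_sub1 x n : cpow x (INR (S n) - 1) = x ^ n.
Proof. rewrite S_INR, <- cpow_INR; f_equal; ring. Qed.

Lemma cpow_INR_S_add1 x n : cpow x (INR (S n) + 1) = x ^ S (S n).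
Proof. rewrite <- cpow_INR, !S_INR; f_equal; ring. Qed.

Lemma Derive_periodic (f : R -> R) L :
  (forall s, f (s + L) = f s) -> forall s, Derive f (s + L) = Derive f s.
Proof.
intros Hper s; unfold Derive; f_equal; apply Lim_ext; intros h.
now replace (s + L + h) with (s + h + L) by ring; rewrite !Hper.
Qed.

Lemma periodic_Derive_root (f : R -> R) L :
  0 < L -> (forall s, f (s + L) = f s) -> (forall s, ex_derive f s) ->
  exists c, Derive f c = 0.
Proof.
intros HL Hper Hf.
destruct (MVT_cor4 f (Derive f) 0 (Rabs L) (fun c _ => Derive_correct f c (Hf c)) L)
  as [c [Hc _]]; [rewrite Rminus_0_r; lra |].
exists c; rewrite <- (Rplus_0_l L), Hper in Hc; nra.
Qed.

Lemma is_derive_0_eq (f : R -> R) :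
  (forall s, is_derive f s 0) -> forall x y, f x = f y.
Proof.
intros Hf x y.
destruct (MVT_cor4 f (fun _ => 0) x (Rabs (y - x)) (fun c _ => Hf c) y (Rle_refl _))
  as [c [Hc _]]; lra.
Qed.

Lemma p_elastic_critical_point p g L :
  0 < L -> (forall s, geod_curv g (s + L) = geod_curv g s) -> p_elastic p g ->
  exists c, (p - 1) * cpow (geod_curv g c) (p + 1) + p * cpow (geod_curv g c) (p - 1) = 0.
Proof.
intros HL Hper [_ [_ [HF2 Hode]]]; cbv zeta in *.
set (F := fun s => cpow (geod_curv g s) (p - 1)) in *.
assert (HFper : forall s, F (s + L) = F s) by (intros s; unfold F; now rewrite Hper).
destruct (periodic_Derive_root (Derive F) L HL (Derive_periodic F L HFper) HF2) as [c Hc].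
exists c; specialize (Hode c); change (Derive_n F 2 c) with (Derive (Derive F) c) in Hode.
rewrite Hc in Hode; unfold F in Hode; lra.
Qed.

Lemma Rpower_elastic_critical p x :
  0 < x -> (p - 1) * Rpower x (p + 1) + p * Rpower x (p - 1) = 0 -> 0 < p < 1.
Proof.
intros Hx Hcrit.
replace (p + 1) with (p - 1 + INR 2) in Hcrit by (simpl; ring).
rewrite Rpower_plus, Rpower_pow in Hcrit by exact Hx.
assert (Hpos : 0 < Rpower x (p - 1)) by apply exp_pos.
assert (Hq : (p - 1) * x ^ 2 + p = 0).
{ apply (Rmult_eq_reg_l (Rpower x (p - 1))); nra. }
assert (0 < x ^ 2) by (apply pow_lt; lra).
split; nra.
Qed.

Lemma pow_elastic_critical n x :
  (INR (S n) - 1) * x ^ S (S n) + INR (S n) * x ^ n = 0 -> x ^ n = 0.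
Proof.
intros Hcrit.
assert (Hn := pos_INR n); rewrite S_INR in Hcrit.
replace (x ^ S (S n)) with (x ^ n * x ^ 2) in Hcrit by (simpl; ring).
assert (0 <= x ^ 2) by (rewrite <- Rsqr_pow2; apply Rle_0_sqr).
apply (Rmult_eq_reg_r (INR n * x ^ 2 + INR n + 1)); nra.
Qed.

Lemma p_elastic_0_flat g : p_elastic 0 g -> forall s, geod_curv g s = 0.
Proof.
intros [_ [_ [_ Hode]]] s; specialize (Hode s); cbv zeta in Hode.
rewrite Rplus_0_l, (cpow_INR _ 1) in Hode; simpl in Hode; lra.
Qed.

(* The first integral of the elastic equation; with F = k^(p-1), the middle
   term is (p-1)^2/(2p) k^(2p). *)
Definition elastic_energy (p : R) (k F : R -> R) (s : R) : R :=
  p / 2 * Derive F s ^ 2 + (p - 1) ^ 2 / (2 * p) * (k s * F s) ^ 2 + p / 2 * F s ^ 2.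

Section FirstIntegral.

Variables (k F : R -> R) (n : nat).
Hypothesis n_pos : (0 < n)%nat.
Hypothesis k_derivable : forall s, ex_derive k s.
Hypothesis F_pow : forall s, F s = k s ^ n.
Hypothesis F'_derivable : forall s, ex_derive (Derive F) s.
Hypothesis elastic : forall s,
  INR (S n) * Derive (Derive F) s + (INR (S n) - 1) * k s ^ S (S n) + INR (S n) * F s = 0.

Lemma Derive_F_pow s : Derive F s = INR n * Derive k s * k s ^ pred n.
Proof.
rewrite (Derive_ext F (fun t => k t ^ n) s F_pow).
apply is_derive_unique, is_derive_pow, Derive_correct, k_derivable.
Qed.

Lemma elastic_energy_derive s : is_derive (elastic_energy (INR (S n)) k F) s 0.
Proof.
assert (HF : forall t, ex_derive F t).
{ intros t; apply (ex_derive_ext (fun t => k t ^ n)); [intros; now rewrite F_pow |].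
  apply ex_derive_pow, k_derivable. }
assert (HF'' : Derive (Derive F) s
  = - ((INR (S n) - 1) * k s ^ S (S n) + INR (S n) * F s) / INR (S n)).
{ specialize (elastic s). assert (Hn := pos_INR n). rewrite S_INR in *. field_simplify_eq; lra. }
assert (Hp : 0 < INR (S n)) by apply lt_0_INR, Nat.lt_0_succ.
remember (INR (S n)) as p eqn:Ep.
unfold elastic_energy; auto_derive; [repeat split; auto |].
change (fun x => Derive F x) with (Derive F); change (fun x => F x) with F;
  change (fun x => k x) with k.
rewrite HF'', Derive_F_pow, F_pow, Ep.
destruct n as [|m]; [lia |]. simpl pred.
replace (k s ^ S (S (S m))) with (k s ^ 3 * k s ^ m) by (simpl; ring).
replace (k s ^ S m) with (k s * k s ^ m) by (simpl; ring).
rewrite !S_INR in *. field. lra.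
Qed.

Lemma elastic_flat c : (2 <= n)%nat -> k c = 0 -> forall s, k s = 0.
Proof.
intros Hn Hc s.
assert (HE : elastic_energy (INR (S n)) k F s = elastic_energy (INR (S n)) k F c)
  by apply is_derive_0_eq, elastic_energy_derive.
assert (HEc : elastic_energy (INR (S n)) k F c = 0).
{ unfold elastic_energy; rewrite Derive_F_pow, F_pow, Hc, !pow_i by lia; ring. }
assert (Hp : 0 < INR (S n)) by apply lt_0_INR, Nat.lt_0_succ.
assert (HFs : F s ^ 2 = 0).
{ rewrite HEc in HE; unfold elastic_energy in HE.
  assert (0 <= (INR (S n) - 1) ^ 2 / (2 * INR (S n)) * (k s * F s) ^ 2).
  { apply Rmult_le_pos; [apply Rdiv_le_0_compat |]; try apply pow2_ge_0; lra. }
  assert (0 <= Derive F s ^ 2) by apply pow2_ge_0.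
  assert (0 <= F s ^ 2) by apply pow2_ge_0.
  nra. }
rewrite F_pow, <- pow_mult in HFs; exact (Rpow_eq_0 _ _ HFs).
Qed.

End FirstIntegral.

Lemma p_elastic_INR_flat n g c :
  (2 <= n)%nat -> arclength_S2_curve g -> p_elastic (INR (S n)) g ->
  geod_curv g c = 0 -> forall s, geod_curv g s = 0.
Proof.
intros Hn Hg [_ [_ [HF2 Hode]]]; cbv zeta in *.
apply (elastic_flat _ (fun s => cpow (geod_curv g s) (INR (S n) - 1)) n); try lia.
- apply geod_curv_ex_derive, Hg.
- intros s; apply cpow_INR_S_sub1.
- exact HF2.
- intros s; rewrite <- cpow_INR_S_add1; apply Hode.
Qed.

Theorem mainTheorem4 (p : R) (g : curve3) :
  arclength_S2_curve g ->
  p_elastic p g ->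
  nonconst_periodic (geod_curv g) ->
  p = 2 \/ (0 < p /\ p < 1).
Proof.
intros Hg Hel [[L [HL Hper]] [s1 [s2 Hne]]].
assert (Hnonflat : ~ forall s, geod_curv g s = 0) by (intros Hz; apply Hne; now rewrite !Hz).
destruct (p_elastic_critical_point p g L HL Hper Hel) as [c Hc].
destruct (classic (is_natp p)) as [[[|n] ->] | Hnat].
- contradict Hnonflat; now apply p_elastic_0_flat.
- rewrite cpow_INR_S_add1, cpow_INR_S_sub1 in Hc.
  apply pow_elastic_critical in Hc.
  destruct n as [|[|n]].
  + simpl in Hc; lra.
  + left; simpl; ring.
  + contradict Hnonflat; apply (p_elastic_INR_flat (S (S n)) g c); try assumption; [lia |].
    exact (Rpow_eq_0 _ _ Hc).
- right; destruct Hel as [Hconv _].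
  apply (Rpower_elastic_critical p (geod_curv g c)); [now apply Hconv |].
  now rewrite <- !cpow_Rpower by now apply Hconv.
Qed.
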